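(* Let $\boldsymbol{x}\in\mathbb{R}^K$ have pairwise distinct entries, let $x_{\max}=\max_k x_k$ be attained at index $\max$, let $\epsilon\in\mathbb{R}$, and suppose the set $\mathcal{N}=\{n : \epsilon< x_n< x_{\max}\}$ is nonempty, with $N=|\mathcal{N}|$. For temperature $T>0$ define $$\mathcal{M}_T(\boldsymbol{x}) = 1-\frac{1}{N}\sum_{n\in\mathcal{N}}\big(\phi_T(\boldsymbol{x})_{\max}-\phi_T(\boldsymbol{x})_n\big).$$ Then the map $T\mapsto \mathcal{M}_T(\boldsymbol{x})$ is strictly increasing on $(0,\infty)$.
   Context: For $T>0$, the SoftMax with temperature $T$ is $\phi_T:\mathbb{R}^K\to\Delta^{K-1}$, $\phi_T(\boldsymbol{x})_i = \dfrac{e^{x_i/T}}{\sum_{k=1}^K e^{x_k/T}}$, where $\Delta^{K-1}=\{\boldsymbol{p}\in\mathbb{R}^K_{\ge 0}: \sum_k p_k=1\}$. The quantity $\mathcal{M}_T$ is the paper's ''multi-modality metric'' applied to $\phi_T$. *)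

From HB Require Import structures.
From mathcomp Require Import all_boot all_order all_algebra.
From mathcomp Require Import all_classical all_reals all_analysis.
Set Implicit Arguments. Unset Strict Implicit. Unset Printing Implicit Defensive.
Import Order.TTheory GRing.Theory Num.Theory.
Local Open Scope ring_scope.

Definition softmax (R : realType) (K : nat) (T : R) (x : 'I_K -> R) (i : 'I_K) : R :=
  expR (x i / T) / \sum_(k < K) expR (x k / T).

Definition Nset (R : realType) (K : nat) (x : 'I_K -> R) (eps : R) (imax : 'I_K)
  : {set 'I_K} := [set n : 'I_K | (eps < x n) && (x n < x imax)].

Definition multimodality (R : realType) (K : nat) (T : R) (x : 'I_K -> R)
  (eps : R) (imax : 'I_K) : R :=
  1 - (#|Nset x eps imax|%:R)^-1 *
      \sum_(n in Nset x eps imax) (softmax T x imax - softmax T x n).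

From HB Require Import structures.
From mathcomp Require Import all_boot all_order all_algebra.
From mathcomp Require Import all_classical all_reals all_analysis.
From mathcomp Require Import ring.
Import Order.TTheory GRing.Theory Num.Theory.
Local Open Scope ring_scope.

(* Writing d_k = x_max - x_k >= 0, the gap phi_T(x)_max - phi_T(x)_n equals
   (1 - e^{-d_n/T}) / Z_T with Z_T = sum_k e^{-d_k/T}.  Raising T weakly
   lowers the numerator and strictly raises Z_T (the term k = n has d_n > 0),
   so every gap over n in N strictly decreases, hence M_T strictly increases. *)

Section TemperatureMonotonicity.

Variable R : realType.

Lemma ler_expR_Ndiv (d T1 T2 : R) :
  0 <= d -> 0 < T1 -> T1 <= T2 -> expR (- d / T1) <= expR (- d / T2).
Proof.
move=> d0 T1p T12; have T2p := lt_le_trans T1p T12.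
rewrite ler_expR !mulNr lerN2 ler_wpM2l // lef_pV2 ?posrE //.
Qed.

Lemma ltr_expR_Ndiv (d T1 T2 : R) :
  0 < d -> 0 < T1 -> T1 < T2 -> expR (- d / T1) < expR (- d / T2).
Proof.
move=> d0 T1p T12; have T2p := lt_trans T1p T12.
by rewrite ltr_expR !mulNr ltrN2 ltr_pM2l // ltf_pV2 ?posrE.
Qed.

Variables (K : nat) (x : 'I_K -> R).

Definition shifted_partition (T : R) (i : 'I_K) : R :=
  \sum_(k < K) expR (- (x i - x k) / T).

Lemma shifted_partition_ge1 T i : 1 <= shifted_partition T i.
Proof.
rewrite /shifted_partition (bigD1 i) //= subrr oppr0 mul0r expR0 lerDl.
by apply: sumr_ge0 => k _; exact: ltW (expR_gt0 _).
Qed.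

Lemma softmax_subE T i n : 0 < T ->
  softmax T x i - softmax T x n =
  (1 - expR (- (x i - x n) / T)) / shifted_partition T i.
Proof.
move=> T0; have T0' : T != 0 by rewrite gt_eqF.
have shiftE k : expR (x k / T) = expR (x i / T) * expR (- (x i - x k) / T).
  by rewrite -expRD; congr expR; field.
have Zp : 0 < shifted_partition T i := lt_le_trans ltr01 (shifted_partition_ge1 T i).
rewrite /softmax (_ : \sum_(k < K) _ = expR (x i / T) * shifted_partition T i).
  by rewrite (shiftE n); field; rewrite !gt_eqF ?expR_gt0.
by rewrite /shifted_partition mulr_sumr; apply: eq_bigr => k _; exact: shiftE.
Qed.

Hypotheses (imax : 'I_K) (x_imax_max : forall k, x k <= x imax).

Lemma shifted_partition_lt n T1 T2 : x n < x imax -> 0 < T1 -> T1 < T2 ->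
  shifted_partition T1 imax < shifted_partition T2 imax.
Proof.
move=> xn T1p T12; rewrite /shifted_partition (bigD1 n) //= [ltRHS](bigD1 n) //=.
apply: ltr_leD; first by apply: ltr_expR_Ndiv; rewrite ?subr_gt0.
apply: ler_sum => k _; apply: ler_expR_Ndiv; rewrite ?subr_ge0 //.
exact: ltW.
Qed.

Lemma softmax_gap_decreasing n T1 T2 : x n < x imax -> 0 < T1 -> T1 < T2 ->
  softmax T2 x imax - softmax T2 x n < softmax T1 x imax - softmax T1 x n.
Proof.
move=> xn T1p T12; have T2p := lt_trans T1p T12.
rewrite !softmax_subE //.
set a2 := 1 - _; set a1 := 1 - _.
set Z1 := shifted_partition T1 imax; set Z2 := shifted_partition T2 imax.
have a2p : 0 < a2.
  by rewrite subr_gt0 -expR0 ltr_expR mulNr oppr_lt0 divr_gt0 ?subr_gt0.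
have a21 : a2 <= a1.
  by rewrite lerD2l lerN2 ler_expR_Ndiv ?subr_ge0 ?(ltW T12).
have Z1p : 0 < Z1 := lt_le_trans ltr01 (shifted_partition_ge1 T1 imax).
have Z12 : Z1 < Z2 := shifted_partition_lt _ _ _ xn T1p T12.
have Z2p := lt_trans Z1p Z12.
apply: (le_lt_trans (y := a1 / Z2)).
  by apply: ler_wpM2r => //; rewrite invr_ge0; exact: ltW.
by rewrite ltr_pM2l ?(lt_le_trans a2p) // ltf_pV2 ?posrE.
Qed.

End TemperatureMonotonicity.

Theorem mainTheorem3 (R : realType) (K : nat) (x : 'I_K -> R) (imax : 'I_K)
  (eps : R) :
  injective x ->
  (forall k : 'I_K, x k <= x imax) ->
  Nset x eps imax != finset.set0 ->
  forall T1 T2 : R, 0 < T1 -> T1 < T2 ->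
    multimodality T1 x eps imax < multimodality T2 x eps imax.
Proof.
move=> _ x_max /set0Pn [n0 n0N] T1 T2 T1p T12.
have cardNp : 0 < #|Nset x eps imax|%:R :> R.
  by rewrite ltr0n; apply/card_gt0P; exists n0.
rewrite /multimodality ltrD2l ltrN2 ltr_pM2l ?invr_gt0 //.
apply: ltr_sum; first by apply/hasP; exists n0; rewrite ?mem_index_enum.
move=> n; rewrite inE => /andP [_ xn].
exact: softmax_gap_decreasing.
Qed.
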